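(* Let $x\in\mathbb{R}_{>0}$. There is no atomic restaking network $G=(V,S,\sigma,w,\theta,\pi)$ satisfying all three of the following conditions: (1) $\sum_{v\in V}\sigma(v) < x\cdot |S|$; (2) for every service $s\in S$, $\sum_{v\in V} w(v,s)=x$; (3) for every service $s\in S$, in the network $G_1=(V,S_1,\sigma_1,w_1,\theta_1,\pi_1)=G\searrow\{s\}$ obtained when the single service $s$ is Byzantine, every remaining service $s'\in S\setminus\{s\}$ satisfies $\sum_{v\in V} w_1(v,s')=x$.
   Context: A restaking network is a tuple $G=(V,S,\sigma,w,\theta,\pi)$ where $V$ is a finite nonempty set of validators, $S$ is a finite set of services, $\sigma:V\to\mathbb{R}_{>0}$ is the stake, $w:V\times S\to\mathbb{R}_{\ge 0}$ is the allocation with $w(v,s)\le\sigma(v)$ for all $v,s$, $\theta:S\to[0,1]$ is the attack threshold and $\pi:S\to\mathbb{R}_{>0}$ is the attack prize. The network is atomic if $w(v,s)\in\{0,\sigma(v)\}$ for all $v\in V$, $s\in S$. Byzantine transition: for $S^B\subseteq S$, the network $G\searrow S^B=(V,S_1,\sigma_1,w_1,\theta_1,\pi_1)$ is defined by $S_1=S\setminus S^B$, $\sigma_1(v)=\max\bigl(0,\sigma(v)-\sum_{s\in S^B}w(v,s)\bigr)$, $w_1(v,s)=\min(w(v,s),\sigma_1(v))$ for $s\in S_1$, and $\theta_1,\pi_1$ the restrictions of $\theta,\pi$ to $S_1$. *)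

From HB Require Import structures.
From mathcomp Require Import all_boot all_order all_algebra.
Set Implicit Arguments. Unset Strict Implicit. Unset Printing Implicit Defensive.
Import Order.TTheory GRing.Theory Num.Theory.
Local Open Scope ring_scope.

Definition restaking_network (R : realFieldType) (V S : finType)
  (sigma : V -> R) (w : V -> S -> R) (theta pi : S -> R) : Prop :=
  [/\ (0 < #|V|)%N,
      (forall v, 0 < sigma v),
      (forall v s, 0 <= w v s /\ w v s <= sigma v),
      (forall s, 0 <= theta s /\ theta s <= 1) &
      (forall s, 0 < pi s)].

Definition atomic (R : realFieldType) (V S : finType)
  (sigma : V -> R) (w : V -> S -> R) : Prop :=
  forall v s, w v s = 0 \/ w v s = sigma v.

(* Byzantine transition G \searrow S^B: stake and allocation of the new
   network (the new service set is S minus S^B; theta, pi are restricted). *)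
Definition byz_stake (R : realFieldType) (V S : finType)
  (sigma : V -> R) (w : V -> S -> R) (SB : {set S}) (v : V) : R :=
  Num.max 0 (sigma v - \sum_(s in SB) w v s).

Definition byz_alloc (R : realFieldType) (V S : finType)
  (sigma : V -> R) (w : V -> S -> R) (SB : {set S}) (v : V) (s : S) : R :=
  Num.min (w v s) (byz_stake sigma w SB v).

From HB Require Import structures.
From mathcomp Require Import all_boot all_order all_algebra.
Set Implicit Arguments. Unset Strict Implicit. Unset Printing Implicit Defensive.
Import Order.TTheory GRing.Theory Num.Theory.
Local Open Scope ring_scope.

(* In an atomic network, making a service s Byzantine wipes out exactly the
   validators staked on s and leaves every other allocation untouched. So if
   every other service still collects x, no validator staked on s can be
   staked on another service: each validator backs at most one service, hence
   its stake covers its total allocation and summing over validators gives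
   sum sigma >= sum_s sum_v w v s = x |S|. *)

Lemma psumr_pred_eq_sum_eq0 (R : numDomainType) (I : finType) (P : pred I)
    (F : I -> R) :
  (forall i, 0 <= F i) -> \sum_(i | P i) F i = \sum_i F i ->
  forall i, ~~ P i -> F i = 0.
Proof.
move=> F_ge0 sumP i Pi; have: \sum_(i | ~~ P i) F i = 0.
  by apply: (addrI (\sum_(i | P i) F i)); rewrite addr0 [RHS]sumP [RHS](bigID P).
by move/eqP; rewrite psumr_eq0 // => /allP/(_ i (mem_index_enum i)); rewrite Pi => /eqP.
Qed.

Lemma sumr_le_single_support (R : numDomainType) (I : finType) (F : I -> R) (c : R) :
  0 <= c -> (forall i, F i <= c) ->
  (forall i j, j != i -> F i != 0 -> F j = 0) ->
  \sum_i F i <= c.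
Proof.
move=> c_ge0 F_le single.
have [i Fi|F0] := pickP (fun i => F i != 0); last first.
  by rewrite big1 // => i _; apply/eqP; rewrite -[_ == 0]negbK F0.
by rewrite (bigD1 i) //= big1 ?addr0 // => j ji; apply: single Fi.
Qed.

Section AtomicNetwork.

Variables (R : realFieldType) (V S : finType).
Variables (sigma : V -> R) (w : V -> S -> R).
Hypothesis w_ge0 : forall v s, 0 <= w v s.
Hypothesis w_le_sigma : forall v s, w v s <= sigma v.
Hypothesis w_atomic : atomic sigma w.

Lemma byz_alloc_set1 v s s' :
  byz_alloc sigma w [set s] v s' = if w v s == 0 then w v s' else 0.
Proof.
rewrite /byz_alloc /byz_stake big_set1.
have [->|wsig] := w_atomic v s; rewrite ?eqxx.
  have sigma_ge0 : 0 <= sigma v := le_trans (w_ge0 v s') (w_le_sigma v s').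
  by rewrite subr0 (max_idPr sigma_ge0) (min_idPl (w_le_sigma v s')).
have [sig0|sig_neq0] := eqVneq (sigma v) 0.
  by rewrite wsig sig0 eqxx subrr maxxx (min_idPl _) // -sig0.
by rewrite wsig (negbTE sig_neq0) subrr maxxx (min_idPr (w_ge0 v s')).
Qed.

Variable x : R.
Hypothesis sum_alloc : forall s, \sum_v w v s = x.
Hypothesis sum_byz_alloc : forall s s', s' != s ->
  \sum_v byz_alloc sigma w [set s] v s' = x.

Lemma alloc_single_service v s s' : s' != s -> w v s != 0 -> w v s' = 0.
Proof.
move=> s's; apply: (@psumr_pred_eq_sum_eq0 _ _ (fun u => w u s == 0) (w^~ s')) => //.
rewrite sum_alloc -(sum_byz_alloc s's) big_mkcond /=.
by apply: eq_bigr => u _; rewrite byz_alloc_set1.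
Qed.

Lemma sum_alloc_le_stake v : 0 <= sigma v -> \sum_s w v s <= sigma v.
Proof.
move=> sigma_ge0; apply: sumr_le_single_support => // s s'; exact: alloc_single_service.
Qed.

Lemma total_stake_ge : (forall v, 0 <= sigma v) -> x * #|S|%:R <= \sum_v sigma v.
Proof.
move=> sigma_ge0.
have <- : \sum_v \sum_s w v s = x * #|S|%:R.
  by rewrite exchange_big /= (eq_bigr _ (fun s _ => sum_alloc s)) sumr_const mulr_natr.
by apply: ler_sum => v _; apply: sum_alloc_le_stake.
Qed.

End AtomicNetwork.

Theorem mainTheorem1 (R : realFieldType) (V S : finType)
  (sigma : V -> R) (w : V -> S -> R) (theta pi : S -> R) (x : R) :
  0 < x ->
  restaking_network sigma w theta pi ->
  atomic sigma w ->
  ~ [/\ \sum_(v : V) sigma v < x * #|S|%:R,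
        (forall s : S, \sum_(v : V) w v s = x) &
        (forall s s' : S, s' != s ->
           \sum_(v : V) byz_alloc sigma w [set s] v s' = x)].
Proof.
move=> _ [_ sigma_gt0 w_bounds _ _] w_atomic [stake_lt sum_alloc sum_byz].
have w_ge0 v s : 0 <= w v s by case: (w_bounds v s).
have w_le v s : w v s <= sigma v by case: (w_bounds v s).
have := total_stake_ge w_ge0 w_le w_atomic sum_alloc sum_byz
  (fun v => ltW (sigma_gt0 v)).
by rewrite leNgt stake_lt.
Qed.
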